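(* Let $d\ge2$, let $\Delta^d$ be the probability simplex in $\mathbb{R}^d$, and let $\pi\in\Delta^d$ have all coordinates positive. Let $\mathcal{A}$ be a coin-betting algorithm that, given past coin outcomes $c'_1,\dots,c'_{t-1}$, outputs a bet $x_t\in\mathbb{R}$, and suppose that for some function $f_T:\mathbb{R}\to\mathbb{R}$ it guarantees, for every sequence $c'_1,\dots,c'_T\in[-1,1]$ (where $c'_t$ may depend on $x_1,\dots,x_t$), $1+\sum_{t=1}^Tc'_tx_t\ge\exp\big(f_T(\sum_{t=1}^Tc'_t)\big)$. Run $d$ copies of $\mathcal{A}$; at round $t$ let $x_{t,i}$ be the bet of copy $i$, set $\hat p_{t,i}=\pi_i\max(x_{t,i},0)$, predict $p_t=\hat p_t/\|\hat p_t\|_1$ if $\hat p_t\ne0$ and $p_t=\pi$ otherwise, receive $g_t\in[0,1]^d$, and feed copy $i$ the coin outcome $c_{t,i}=\langle g_t,p_t\rangle-g_{t,i}$ if $x_{t,i}>0$ and $c_{t,i}=\max(\langle g_t,p_t\rangle-g_{t,i},0)$ if $x_{t,i}\le0$. Then for every concave non-decreasing $h:\mathbb{R}\to\mathbb{R}$ satisfying $x\le h(f_T(x))$ for all $x\in[-T,T]$, and every $u\in\Delta^d$, \[ \sum_{t=1}^T\langle g_t,p_t-u\rangle\le h\big(\mathrm{KL}(u;\pi)\big). \]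
   Context: $\mathrm{KL}(u;\pi)=\sum_{i=1}^du_i\ln\frac{u_i}{\pi_i}$ with the convention $0\ln0=0$. *)

From Stdlib Require Import Reals List.
Import ListNotations.
Open Scope R_scope.

Fixpoint sumR (n : nat) (f : nat -> R) : R :=
  match n with O => 0 | S m => sumR m f + f m end.

(* vectors in R^d are functions nat -> R, coordinates 0..d-1 *)
Definition in_simplex (d : nat) (u : nat -> R) : Prop :=
  (forall i, (i < d)%nat -> 0 <= u i) /\ sumR d u = 1.

Definition KL (d : nat) (u pi : nat -> R) : R :=
  sumR d (fun i => if Req_EM_T (u i) 0 then 0 else u i * ln (u i / pi i)).

(* A coin-betting algorithm maps the list of past coin outcomes
   [c_1; ...; c_{t-1}] to the bet x_t. *)
Definition betting_algo := list R -> R.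

Definition wealth_guarantee (A : betting_algo) (T : nat) (fT : R -> R) : Prop :=
  forall c : nat -> R,
    (forall t, (1 <= t <= T)%nat -> -1 <= c t <= 1) ->
    1 + sumR T (fun k => c (S k) * A (map c (seq 1 k)))
      >= exp (fT (sumR T (fun k => c (S k)))).

(* Reduction. H i = history of coin outcomes fed so far to copy i. *)
Definition phat (pi : nat -> R) (A : betting_algo) (H : nat -> list R) (i : nat) : R :=
  pi i * Rmax (A (H i)) 0.

Definition pred (d : nat) (pi : nat -> R) (A : betting_algo) (H : nat -> list R)
  (i : nat) : R :=
  let s := sumR d (fun j => Rabs (phat pi A H j)) in
  if Req_EM_T s 0 then pi i else phat pi A H i / s.

Definition coin (d : nat) (pi : nat -> R) (A : betting_algo) (H : nat -> list R)
  (gt : nat -> R) (i : nat) : R :=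
  let gp := sumR d (fun j => gt j * pred d pi A H j) in
  if Rlt_dec 0 (A (H i)) then gp - gt i else Rmax (gp - gt i) 0.

(* hist t = histories of all copies after rounds 1..t; g t = gain vector at round t *)
Fixpoint hist (d : nat) (pi : nat -> R) (A : betting_algo) (g : nat -> nat -> R)
  (t : nat) : nat -> list R :=
  match t with
  | O => fun _ => []
  | S t' => fun i => hist d pi A g t' i ++ [coin d pi A (hist d pi A g t') (g (S t')) i]
  end.

(* prediction p_t at round t >= 1 *)
Definition p_round (d : nat) (pi : nat -> R) (A : betting_algo) (g : nat -> nat -> R)
  (t : nat) : nat -> R :=
  pred d pi A (hist d pi A g (Nat.pred t)).

Definition concave (h : R -> R) : Prop :=
  forall x y l, 0 <= l <= 1 -> l * h x + (1 - l) * h y <= h (l * x + (1 - l) * y).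

Definition nondecreasing (h : R -> R) : Prop :=
  forall x y, x <= y -> h x <= h y.

(* The coins are chosen so that the pi-weighted bets never gain in any round:
   sum_i pi_i c_{t,i} x_{t,i} <= 0.  Positive bets are proportional to p_t,
   against which the gaps <g_t,p_t> - g_{t,i} average to zero, and nonpositive
   bets only receive nonnegative coins.  Hence the wealths
   W_i = 1 + sum_t c_{t,i} x_{t,i} satisfy sum_i pi_i W_i <= 1.  Since
   c_{t,i} >= <g_t,p_t> - g_{t,i}, the regret against u is at most
   sum_i u_i G_i with G_i = sum_t c_{t,i}, and
   G_i <= h (f_T G_i) <= h (ln W_i) gives, by Jensen and the bound
   u ln W <= u ln (u/pi) + pi W - u, the estimate
   h (KL(u;pi) + sum_i pi_i W_i - 1) <= h (KL(u;pi)). *)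
From Stdlib Require Import Reals List Lra Lia.
Open Scope R_scope.

Lemma sumR_ext n f g : (forall i, (i < n)%nat -> f i = g i) -> sumR n f = sumR n g.
Proof.
  induction n as [|n IH]; intros Hfg; simpl; [reflexivity|].
  rewrite IH by (intros; apply Hfg; lia); rewrite Hfg by lia; reflexivity.
Qed.

Lemma sumR_le n f g : (forall i, (i < n)%nat -> f i <= g i) -> sumR n f <= sumR n g.
Proof.
  induction n as [|n IH]; intros Hfg; simpl; [lra|].
  apply Rplus_le_compat; [apply IH; intros; apply Hfg|apply Hfg]; lia.
Qed.

Lemma sumR_0 n : sumR n (fun _ => 0) = 0.
Proof. induction n; simpl; lra. Qed.

Lemma sumR_plus n f g : sumR n (fun i => f i + g i) = sumR n f + sumR n g.
Proof. induction n; simpl; lra. Qed.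

Lemma sumR_minus n f g : sumR n (fun i => f i - g i) = sumR n f - sumR n g.
Proof. induction n; simpl; lra. Qed.

Lemma sumR_scal_l n c f : sumR n (fun i => c * f i) = c * sumR n f.
Proof. induction n; simpl; lra. Qed.

Lemma sumR_swap n m (f : nat -> nat -> R) :
  sumR n (fun i => sumR m (f i)) = sumR m (fun k => sumR n (fun i => f i k)).
Proof.
  induction n as [|n IH]; simpl.
  - symmetry; apply sumR_0.
  - rewrite IH, <- sumR_plus; reflexivity.
Qed.

Lemma sumR_nonneg n f : (forall i, (i < n)%nat -> 0 <= f i) -> 0 <= sumR n f.
Proof. intros Hf; rewrite <- (sumR_0 n); apply sumR_le; exact Hf. Qed.

Lemma sumR_nonneg_eq0 n f : (forall i, (i < n)%nat -> 0 <= f i) -> sumR n f = 0 ->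
  forall i, (i < n)%nat -> f i = 0.
Proof.
  induction n as [|n IH]; simpl; intros Hf Hsum i Hi; [lia|].
  assert (0 <= sumR n f) by (apply sumR_nonneg; intros; apply Hf; lia).
  assert (0 <= f n) by (apply Hf; lia).
  destruct (Nat.eq_dec i n) as [->|Hin]; [lra|].
  apply IH; [intros; apply Hf; lia | lra | lia].
Qed.

Lemma sumR_abs_le_INR n f : (forall i, (i < n)%nat -> -1 <= f i <= 1) ->
  - INR n <= sumR n f <= INR n.
Proof.
  induction n as [|n IH]; intros Hf; simpl sumR; [simpl; lra|].
  assert (- INR n <= sumR n f <= INR n) by (apply IH; intros; apply Hf; lia).
  assert (-1 <= f n <= 1) by (apply Hf; lia).
  rewrite S_INR; lra.
Qed.

Lemma sumR_mul_simplex_bounds d (a p : nat -> R) :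
  (forall j, (j < d)%nat -> 0 <= a j <= 1) -> in_simplex d p ->
  0 <= sumR d (fun j => a j * p j) <= 1.
Proof.
  intros Ha [Hp Hsum]; split.
  - apply sumR_nonneg; intros j Hj; apply Rmult_le_pos; [apply Ha|apply Hp]; auto.
  - rewrite <- Hsum; apply sumR_le; intros j Hj.
    pose proof (Ha j Hj); pose proof (Hp j Hj); nra.
Qed.

Lemma sumR_regret_as_gaps d (a p u : nat -> R) : sumR d u = 1 ->
  sumR d (fun i => a i * (p i - u i))
  = sumR d (fun i => u i * (sumR d (fun j => a j * p j) - a i)).
Proof.
  intros Hu.
  rewrite (sumR_ext d _ (fun i => a i * p i - a i * u i)) by (intros; ring).
  rewrite (sumR_ext d (fun i => u i * _)
             (fun i => sumR d (fun j => a j * p j) * u i - a i * u i)) by (intros; ring).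
  rewrite !sumR_minus, sumR_scal_l, Hu; ring.
Qed.

Lemma concave_jensen (h : R -> R) : concave h -> forall n w y,
  (forall i, (i < n)%nat -> 0 <= w i) -> sumR n w = 1 ->
  sumR n (fun i => w i * h (y i)) <= h (sumR n (fun i => w i * y i)).
Proof.
  intros Hconc n; induction n as [|n IH]; intros w y Hw Hsum; simpl in *; [lra|].
  assert (Hwn : 0 <= w n) by (apply Hw; lia).
  destruct (Req_dec (w n) 1) as [Hwn1|Hwn1].
  - assert (Hzero : forall i, (i < n)%nat -> w i = 0).
    { apply sumR_nonneg_eq0; [intros; apply Hw; lia | lra]. }
    rewrite (sumR_ext n (fun i => w i * h (y i)) (fun _ => 0)),
            (sumR_ext n (fun i => w i * y i) (fun _ => 0)), sumR_0, Hwn1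
      by (intros i Hi; rewrite (Hzero i Hi); ring).
    rewrite !Rplus_0_l, !Rmult_1_l; lra.
  - (* renormalise the first n weights and use concavity once *)
    assert (w n < 1).
    { assert (0 <= sumR n w) by (apply sumR_nonneg; intros; apply Hw; lia). lra. }
    set (w' := fun i => w i / (1 - w n)).
    assert (Hrescale : forall F : nat -> R,
      sumR n (fun i => w i * F i) = (1 - w n) * sumR n (fun i => w' i * F i)).
    { intros F; rewrite <- sumR_scal_l; apply sumR_ext; intros; unfold w'; field; lra. }
    assert (IHw' : sumR n (fun i => w' i * h (y i)) <= h (sumR n (fun i => w' i * y i))).
    { apply IH.
      - intros i Hi; unfold w'; apply Rle_mult_inv_pos; [apply Hw; lia | lra].
      - pose proof (Hrescale (fun _ => 1)) as Hw1; simpl in Hw1.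
        rewrite (sumR_ext n (fun i => w i * 1) w), (sumR_ext n (fun i => w' i * 1) w')
          in Hw1 by (intros; ring).
        apply (Rmult_eq_reg_l (1 - w n)); lra. }
    rewrite (Hrescale (fun i => h (y i))), (Hrescale y).
    pose proof (Hconc (sumR n (fun i => w' i * y i)) (y n) (1 - w n) ltac:(lra)) as Hc.
    replace (1 - (1 - w n)) with (w n) in Hc by ring.
    apply Rplus_le_compat_r with (r := w n * h (y n)) in IHw'.
    apply Rmult_le_compat_l with (r := 1 - w n) in IHw'; lra.
Qed.

Lemma ln_le_sub1 x : 0 < x -> ln x <= x - 1.
Proof. intros Hx; pose proof (exp_ineq1_le (ln x)); rewrite exp_ln in *; lra. Qed.

Lemma ln_ge_of_exp_le a x : exp a <= x -> a <= ln x.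
Proof.
  intros Hax; pose proof (exp_pos a).
  destruct (Rle_lt_dec a (ln x)) as [|Hlt]; [assumption|].
  apply exp_increasing in Hlt; rewrite exp_ln in Hlt; lra.
Qed.

(* The first term on the right is the KL summand, with 0 ln 0 = 0. *)
Lemma mul_ln_le_KL_summand u p w : 0 <= u -> 0 < p -> 0 < w ->
  u * ln w <= (if Req_EM_T u 0 then 0 else u * ln (u / p)) + (p * w - u).
Proof.
  intros Hu Hp Hw.
  pose proof (Rmult_lt_0_compat p w Hp Hw).
  destruct (Req_EM_T u 0) as [->|Hu0]; [lra|].
  assert (Hupos : 0 < u) by lra.
  replace (ln w) with (ln (u / p) + ln (p * w / u))
    by (rewrite <- ln_mult by (apply Rdiv_lt_0_compat; lra); f_equal; field; lra).
  pose proof (ln_le_sub1 (p * w / u) ltac:(apply Rdiv_lt_0_compat; lra)) as Hln.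
  apply Rmult_le_compat_l with (r := u) in Hln; [|lra].
  replace (u * (p * w / u - 1)) with (p * w - u) in Hln by (field; lra).
  lra.
Qed.

Lemma sumR_mul_ln_le_KL d (u pi w : nat -> R) :
  (forall i, (i < d)%nat -> 0 <= u i /\ 0 < pi i /\ 0 < w i) ->
  sumR d (fun i => u i * ln (w i)) <= KL d u pi + (sumR d (fun i => pi i * w i) - sumR d u).
Proof.
  intros Hpos; unfold KL; rewrite <- sumR_minus, <- sumR_plus.
  apply sumR_le; intros i Hi; destruct (Hpos i Hi) as (? & ? & ?).
  apply mul_ln_le_KL_summand; assumption.
Qed.

Definition phat_mass d pi A H := sumR d (fun j => Rabs (phat pi A H j)).

Definition pred_gain d pi A H (gt : nat -> R) := sumR d (fun j => gt j * pred d pi A H j).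

Section OneRound.

Variables (d : nat) (pi : nat -> R) (A : betting_algo) (H : nat -> list R) (gt : nat -> R).
Hypothesis pi_simplex : in_simplex d pi.

Lemma pred_unfold i : pred d pi A H i =
  if Req_EM_T (phat_mass d pi A H) 0 then pi i else phat pi A H i / phat_mass d pi A H.
Proof. reflexivity. Qed.

Lemma coin_unfold i : coin d pi A H gt i =
  if Rlt_dec 0 (A (H i)) then pred_gain d pi A H gt - gt i
  else Rmax (pred_gain d pi A H gt - gt i) 0.
Proof. reflexivity. Qed.

Lemma phat_nonneg i : (i < d)%nat -> 0 <= phat pi A H i.
Proof. intros Hi; apply Rmult_le_pos; [apply pi_simplex, Hi | apply Rmax_r]. Qed.

Lemma phat_mass_sumR : phat_mass d pi A H = sumR d (phat pi A H).
Proof. apply sumR_ext; intros; apply Rabs_pos_eq, phat_nonneg; assumption. Qed.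

Lemma pred_phat_scaled : phat_mass d pi A H <> 0 ->
  forall i, pred d pi A H i = / phat_mass d pi A H * phat pi A H i.
Proof.
  intros Hmass i; rewrite pred_unfold.
  destruct (Req_EM_T _ 0); [contradiction | unfold Rdiv; ring].
Qed.

Lemma pred_simplex : in_simplex d (pred d pi A H).
Proof.
  pose proof pi_simplex as [Hpi_nonneg Hsum].
  destruct (Req_EM_T (phat_mass d pi A H) 0) as [Hmass|Hmass].
  - assert (Hpred_pi : forall i, pred d pi A H i = pi i)
      by (intros; rewrite pred_unfold; destruct (Req_EM_T _ 0); [reflexivity | contradiction]).
    split; [intros; rewrite Hpred_pi; auto | rewrite (sumR_ext d _ pi); auto].
  - assert (0 <= phat_mass d pi A H)
      by (rewrite phat_mass_sumR; apply sumR_nonneg, phat_nonneg).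
    split.
    + intros i Hi; rewrite pred_phat_scaled by assumption.
      apply Rmult_le_pos; [apply Rlt_le, Rinv_0_lt_compat; lra | apply phat_nonneg; auto].
    + rewrite (sumR_ext d _ (fun j => / phat_mass d pi A H * phat pi A H j))
        by (intros; apply pred_phat_scaled; assumption).
      rewrite sumR_scal_l, <- phat_mass_sumR; field; assumption.
Qed.

Lemma pred_gain_bounds :
  (forall j, (j < d)%nat -> 0 <= gt j <= 1) -> 0 <= pred_gain d pi A H gt <= 1.
Proof. intros Hg; apply sumR_mul_simplex_bounds; [exact Hg | exact pred_simplex]. Qed.

Lemma coin_bounds i :
  (forall j, (j < d)%nat -> 0 <= gt j <= 1) -> (i < d)%nat -> -1 <= coin d pi A H gt i <= 1.
Proof.
  intros Hg Hi.
  pose proof (pred_gain_bounds Hg); pose proof (Hg i Hi).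
  rewrite coin_unfold; destruct (Rlt_dec _ _); [lra|].
  unfold Rmax; destruct (Rle_dec _ _); lra.
Qed.

Lemma gap_le_coin i : pred_gain d pi A H gt - gt i <= coin d pi A H gt i.
Proof. rewrite coin_unfold; destruct (Rlt_dec _ _); [lra | apply Rmax_l]. Qed.

(* Positive bets make pi_i x_i equal to phat_i; a nonpositive bet against a
   nonnegative coin only loses. *)
Lemma pi_coin_bet_le i : (i < d)%nat ->
  pi i * (coin d pi A H gt i * A (H i)) <= phat pi A H i * (pred_gain d pi A H gt - gt i).
Proof.
  intros Hi; rewrite coin_unfold; unfold phat.
  destruct (Rlt_dec 0 (A (H i))) as [Hpos|Hnpos].
  - rewrite Rmax_left by lra; right; ring.
  - rewrite (Rmax_right (A (H i)) 0) by lra.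
    assert (0 <= pi i * Rmax (pred_gain d pi A H gt - gt i) 0)
      by (apply Rmult_le_pos; [apply pi_simplex, Hi | apply Rmax_r]).
    nra.
Qed.

Lemma sumR_phat_gap : sumR d (fun i => phat pi A H i * (pred_gain d pi A H gt - gt i)) = 0.
Proof.
  rewrite (sumR_ext d _ (fun i => pred_gain d pi A H gt * phat pi A H i - gt i * phat pi A H i))
    by (intros; ring).
  rewrite sumR_minus, sumR_scal_l, <- phat_mass_sumR.
  destruct (Req_EM_T (phat_mass d pi A H) 0) as [Hmass|Hmass].
  - rewrite phat_mass_sumR in Hmass.
    rewrite (sumR_ext d (fun i => gt i * phat pi A H i) (fun _ => 0)), sumR_0
      by (intros i Hi; rewrite (sumR_nonneg_eq0 d _ phat_nonneg Hmass i Hi); ring).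
    rewrite phat_mass_sumR, Hmass; ring.
  - unfold pred_gain.
    rewrite (sumR_ext d (fun j => gt j * pred d pi A H j)
               (fun j => / phat_mass d pi A H * (gt j * phat pi A H j)))
      by (intros; rewrite pred_phat_scaled by assumption; ring).
    rewrite sumR_scal_l; field; assumption.
Qed.

Lemma sumR_pi_coin_bet_nonpos :
  sumR d (fun i => pi i * (coin d pi A H gt i * A (H i))) <= 0.
Proof. rewrite <- sumR_phat_gap; apply sumR_le, pi_coin_bet_le. Qed.

End OneRound.

Section Reduction.

Variables (d : nat) (pi : nat -> R) (A : betting_algo) (g : nat -> nat -> R) (T : nat).

Definition coins (i t : nat) : R := coin d pi A (hist d pi A g (Nat.pred t)) (g t) i.

Definition wealth (i : nat) : R :=
  1 + sumR T (fun k => coins i (S k) * A (hist d pi A g k i)).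

Lemma hist_coins i k : hist d pi A g k i = map (coins i) (seq 1 k).
Proof.
  induction k as [|k IH]; [reflexivity|].
  cbn [hist]; rewrite IH, seq_S, map_app; reflexivity.
Qed.

Hypothesis pi_simplex : in_simplex d pi.
Hypothesis g_bounds : forall t i, (1 <= t <= T)%nat -> (i < d)%nat -> 0 <= g t i <= 1.

Lemma coins_bounds i t : (i < d)%nat -> (1 <= t <= T)%nat -> -1 <= coins i t <= 1.
Proof.
  intros Hi Ht; apply coin_bounds; [exact pi_simplex | | exact Hi].
  intros j Hj; apply g_bounds; assumption.
Qed.

Lemma exp_le_wealth fT i : wealth_guarantee A T fT -> (i < d)%nat ->
  exp (fT (sumR T (fun k => coins i (S k)))) <= wealth i.
Proof.
  intros Hwg Hi; unfold wealth.
  rewrite (sumR_ext T (fun k => coins i (S k) * A (hist d pi A g k i))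
                      (fun k => coins i (S k) * A (map (coins i) (seq 1 k))))
    by (intros; rewrite hist_coins; reflexivity).
  apply Rge_le, Hwg; intros; apply coins_bounds; assumption.
Qed.

Lemma sumR_pi_wealth_le1 : sumR d (fun i => pi i * wealth i) <= 1.
Proof.
  pose proof pi_simplex as [_ Hsum]; unfold wealth.
  rewrite (sumR_ext d _ (fun i => pi i + sumR T (fun k => pi i * (coins i (S k) * A (hist d pi A g k i)))))
    by (intros; rewrite sumR_scal_l; ring).
  rewrite sumR_plus, sumR_swap, Hsum.
  assert (sumR T (fun k => sumR d (fun i => pi i * (coins i (S k) * A (hist d pi A g k i)))) <= 0).
  { rewrite <- (sumR_0 T); apply sumR_le; intros k _.
    apply sumR_pi_coin_bet_nonpos; exact pi_simplex. }
  lra.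
Qed.

Lemma regret_le_sumR_coins (u : nat -> R) : in_simplex d u ->
  sumR T (fun k => sumR d (fun i => g (S k) i * (p_round d pi A g (S k) i - u i)))
  <= sumR d (fun i => u i * sumR T (fun k => coins i (S k))).
Proof.
  intros [Hu Hsum].
  rewrite (sumR_ext d _ (fun i => sumR T (fun k => u i * coins i (S k))))
    by (intros; rewrite sumR_scal_l; reflexivity).
  rewrite (sumR_swap d T); apply sumR_le; intros k _.
  unfold p_round; simpl Nat.pred.
  rewrite (sumR_regret_as_gaps d (g (S k)) (pred d pi A (hist d pi A g k)) u Hsum).
  apply sumR_le; intros i Hi; apply Rmult_le_compat_l; [auto | apply gap_le_coin].
Qed.

End Reduction.

Theorem mainTheorem19 (d : nat) (pi : nat -> R) (A : betting_algo) (T : nat)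
  (fT : R -> R) (g : nat -> nat -> R) (h : R -> R) (u : nat -> R) :
  (2 <= d)%nat ->
  in_simplex d pi ->
  (forall i, (i < d)%nat -> 0 < pi i) ->
  wealth_guarantee A T fT ->
  (forall t i, (1 <= t <= T)%nat -> (i < d)%nat -> 0 <= g t i <= 1) ->
  concave h ->
  nondecreasing h ->
  (forall x, - INR T <= x <= INR T -> x <= h (fT x)) ->
  in_simplex d u ->
  sumR T (fun k => sumR d (fun i => g (S k) i * (p_round d pi A g (S k) i - u i)))
    <= h (KL d u pi).
Proof.
  (* the bound holds for every d *)
  intros _ Hpi Hpi_pos Hwg Hg Hconc Hmono Hfh Hu.
  pose proof Hu as [Hu_nonneg Hu_sum].
  set (G i := sumR T (fun k => coins d pi A g i (S k))).
  set (W i := wealth d pi A g T i).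
  assert (HW : forall i, (i < d)%nat -> exp (fT (G i)) <= W i)
    by (intros; apply exp_le_wealth; assumption).
  assert (HG : forall i, (i < d)%nat -> G i <= h (fT (G i))).
  { intros i Hi; apply Hfh, sumR_abs_le_INR; intros k Hk.
    apply (coins_bounds d pi A g T); auto; lia. }
  assert (HpiW : sumR d (fun i => pi i * W i) <= 1) by exact (sumR_pi_wealth_le1 d pi A g T Hpi).
  apply (Rle_trans _ _ _ (regret_le_sumR_coins d pi A g T u Hu)).
  apply (Rle_trans _ (sumR d (fun i => u i * h (fT (G i))))).
  { apply sumR_le; intros i Hi; apply Rmult_le_compat_l; [apply Hu_nonneg | apply HG]; exact Hi. }
  apply (Rle_trans _ _ _ (concave_jensen h Hconc d u (fun i => fT (G i)) Hu_nonneg Hu_sum)).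
  apply Hmono.
  apply (Rle_trans _ (sumR d (fun i => u i * ln (W i)))).
  { apply sumR_le; intros i Hi; apply Rmult_le_compat_l, ln_ge_of_exp_le, HW; auto. }
  enough (sumR d (fun i => u i * ln (W i)) <= KL d u pi + (sumR d (fun i => pi i * W i) - sumR d u))
    by lra.
  apply sumR_mul_ln_le_KL; intros i Hi.
  pose proof (exp_pos (fT (G i))); pose proof (HW i Hi); repeat split; auto; lra.
Qed.
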